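(* Let $C\subsetneq S^n\subset\mathbb{R}^{n+1}$ be a closed convex subset of the round unit sphere with non-empty interior. Then there is a unique point $x_0\in C$ such that $d(x_0,\partial C)=\sup_{x\in C}d(x,\partial C)$. Moreover, $\sup_{y\in C}d(y,x_0)\le\frac{\pi}{2}$.
   Context: $d$ denotes the spherical (angular) metric on $S^n$; $C$ is convex if it contains the minimal geodesic segment between any two of its points at distance $<\pi$; $\partial C$ is the topological boundary of $C$ in $S^n$. *)

From HB Require Import structures.
From mathcomp Require Import all_boot all_order all_algebra.
From mathcomp Require Import all_classical all_reals all_analysis.
Set Implicit Arguments. Unset Strict Implicit. Unset Printing Implicit Defensive.
Import Order.TTheory GRing.Theory Num.Theory.
Local Open Scope classical_set_scope.
Local Open Scope ring_scope.

Definition dotp (R : realType) (m : nat) (x y : 'rV[R]_m) : R :=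
  \sum_(i < m) x 0 i * y 0 i.

Definition sphere (R : realType) (n : nat) : set 'rV[R]_(n.+1) :=
  [set x | dotp x x = 1].

Definition sdist (R : realType) (n : nat) (x y : 'rV[R]_(n.+1)) : R :=
  acos (dotp x y).

(* minimal geodesic segment between x and y (used when sdist x y < pi):
   {x} if x = y, otherwise the great-circle arc
   t |-> (sin((1-t)th) x + sin(t th) y) / sin th, t in [0,1], th = d(x,y). *)
Definition geod_seg (R : realType) (n : nat) (x y : 'rV[R]_(n.+1))
  : set 'rV[R]_(n.+1) :=
  let th := sdist x y in
  [set z | if x == y then z = x else
     exists t : R, 0 <= t <= 1 /\
       z = (sin ((1 - t) * th) / sin th) *: x + (sin (t * th) / sin th) *: y].

Definition sconvex (R : realType) (n : nat) (C : set 'rV[R]_(n.+1)) : Prop :=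
  C `<=` @sphere R n /\
  forall x y, C x -> C y -> sdist x y < pi -> geod_seg x y `<=` C.

Definition sclosed (R : realType) (n : nat) (C : set 'rV[R]_(n.+1)) : Prop :=
  forall x, @sphere R n x ->
    (forall e : R, 0 < e -> exists y, C y /\ sdist x y < e) -> C x.

Definition sinterior (R : realType) (n : nat) (C : set 'rV[R]_(n.+1))
  : set 'rV[R]_(n.+1) :=
  [set x | @sphere R n x /\ exists2 e : R, 0 < e &
     forall y, @sphere R n y -> sdist x y < e -> C y].

Definition sboundary (R : realType) (n : nat) (C : set 'rV[R]_(n.+1))
  : set 'rV[R]_(n.+1) :=
  [set x | @sphere R n x /\ forall e : R, 0 < e ->
     (exists y, C y /\ sdist x y < e) /\
     (exists z, @sphere R n z /\ ~ C z /\ sdist x z < e)].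

(* d(x, A) = inf_{a in A} d(x, a), as an extended real (+oo if A is empty) *)
Definition sdist_set (R : realType) (n : nat) (x : 'rV[R]_(n.+1))
  (A : set 'rV[R]_(n.+1)) : \bar R :=
  ereal_inf [set (sdist x a)%:E | a in A].

(* Let K be the cone R_{>0} C in R^{n+1}; spherical convexity of C is
   convexity of K.  The open cap {z | c < z.x} of C around x corresponds to the
   Euclidean ball of radius sqrt(1 - c^2) around x in K, and d(x, dC) is acos
   of the least such c.  Let s be the infimum of these cosines over x in C.
   Adding the balls of two caps of cosine c around x and y gives a ball around
   x + y, whence |x - y|^2 (1 - s^2) <= 4 (c^2 - s^2): near-optimal centres
   form a Cauchy sequence and its limit is the unique incentre x0.  A cap
   larger than a hemisphere would put a ball around 0 into K, i.e. C = S^n, so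
   s >= 0; and if y.x0 < 0 for some y in C, shifting the ball of x0 along y
   inside K would give a deeper cap, so d(y, x0) <= pi/2.  When dC is empty
   (possible only for n = 0) all distances to dC are infinite and C is a
   single point. *)

From HB Require Import structures.
From mathcomp Require Import all_boot all_order all_algebra.
From mathcomp Require Import all_classical all_reals all_analysis.
From mathcomp Require Import ring lra.
Import Order.TTheory GRing.Theory Num.Theory.
Local Open Scope classical_set_scope.
Local Open Scope ring_scope.
Set Implicit Arguments. Unset Strict Implicit. Unset Printing Implicit Defensive.

Section Dotp.
Variables (R : realType) (m : nat).
Implicit Types (x y z : 'rV[R]_m) (a : R).

Lemma dotpC x y : dotp x y = dotp y x.
Proof. by apply: eq_bigr => i _; rewrite mulrC. Qed.

Lemma dotpDl x y z : dotp (x + y) z = dotp x z + dotp y z.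
Proof. by rewrite /dotp -big_split; apply: eq_bigr => i _; rewrite mxE mulrDl. Qed.

Lemma dotpZl a x y : dotp (a *: x) y = a * dotp x y.
Proof. by rewrite /dotp mulr_sumr; apply: eq_bigr => i _; rewrite mxE mulrA. Qed.

Lemma dotpNl x y : dotp (- x) y = - dotp x y.
Proof. by rewrite -scaleN1r dotpZl mulN1r. Qed.

Lemma dotpBl x y z : dotp (x - y) z = dotp x z - dotp y z.
Proof. by rewrite dotpDl dotpNl. Qed.

Lemma dotpDr x y z : dotp x (y + z) = dotp x y + dotp x z.
Proof. by rewrite dotpC dotpDl !(dotpC x). Qed.

Lemma dotpZr a x y : dotp x (a *: y) = a * dotp x y.
Proof. by rewrite dotpC dotpZl dotpC. Qed.

Lemma dotpNr x y : dotp x (- y) = - dotp x y.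
Proof. by rewrite dotpC dotpNl dotpC. Qed.

Lemma dotpBr x y z : dotp x (y - z) = dotp x y - dotp x z.
Proof. by rewrite dotpDr dotpNr. Qed.

Lemma dotp0l x : dotp 0 x = 0.
Proof. by rewrite -(scale0r (0 : 'rV[R]_m)) dotpZl mul0r. Qed.

Lemma dotp0r x : dotp x 0 = 0.
Proof. by rewrite dotpC dotp0l. Qed.

Lemma dotp_ge0 x : 0 <= dotp x x.
Proof. by apply: sumr_ge0 => i _; rewrite -expr2 sqr_ge0. Qed.

Lemma dotp_eq0 x : dotp x x = 0 -> x = 0.
Proof.
move=> /eqP; rewrite psumr_eq0; last by move=> i _; rewrite -expr2 sqr_ge0.
move=> /allP x0; apply/rowP => i; rewrite mxE.
by have := x0 i (mem_index_enum i); rewrite /= -expr2 sqrf_eq0 => /eqP.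
Qed.

Lemma dotp_gt0 x : x != 0 -> 0 < dotp x x.
Proof.
move=> x0; rewrite lt_neqAle dotp_ge0 andbT eq_sym.
by apply: contra x0 => /eqP/dotp_eq0 ->.
Qed.

Lemma coord_sqr_le_dotp x i : x 0 i ^+ 2 <= dotp x x.
Proof.
rewrite /dotp (bigD1 i) //= expr2 lerDl.
by apply: sumr_ge0 => j _; rewrite -expr2 sqr_ge0.
Qed.

Lemma dotp_sqr_le x y : dotp x y ^+ 2 <= dotp x x * dotp y y.
Proof.
have [->|y0] := eqVneq y 0; first by rewrite dotp0r dotp0l expr0n /= mulr0.
have yy := dotp_gt0 y0.
have := dotp_ge0 (dotp y y *: x - dotp x y *: y).
rewrite dotpBl !dotpBr !dotpZl !dotpZr (dotpC y x) => h.
have : 0 <= dotp y y * (dotp y y * dotp x x - dotp x y ^+ 2) by nra.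
by rewrite pmulr_rge0 // subr_ge0; nra.
Qed.

Definition vnorm x := Num.sqrt (dotp x x).
Definition normalize x := (vnorm x)^-1 *: x.

Lemma vnorm_gt0 x : x != 0 -> 0 < vnorm x.
Proof. by move=> x0; rewrite sqrtr_gt0 dotp_gt0. Qed.

Lemma vnorm_sqr x : vnorm x ^+ 2 = dotp x x.
Proof. by rewrite sqr_sqrtr // dotp_ge0. Qed.

Lemma dotp_normalize x : x != 0 -> dotp (normalize x) (normalize x) = 1.
Proof.
move=> x0; have := vnorm_gt0 x0; have := vnorm_sqr x.
by rewrite /normalize dotpZl dotpZr => <- ?; field; lra.
Qed.

Lemma normalizeZ a x : 0 < a -> normalize (a *: x) = normalize x.
Proof.
move=> a0; rewrite /normalize /vnorm dotpZl dotpZr mulrA sqrtrM ?mulr_ge0 ?ltW //.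
rewrite -expr2 sqrtr_sqr gtr0_norm // scalerA invfM mulrAC mulVf ?gt_eqF //.
by rewrite mul1r.
Qed.

Lemma normalize_id x : dotp x x = 1 -> normalize x = x.
Proof. by move=> x1; rewrite /normalize /vnorm x1 sqrtr1 invr1 scale1r. Qed.

Lemma vnorm_scale_normalize x : x != 0 -> vnorm x *: normalize x = x.
Proof. by move=> x0; rewrite /normalize scalerA mulfV ?scale1r // gt_eqF ?vnorm_gt0. Qed.

Lemma unit_dotp_neq0 x : dotp x x = 1 -> x != 0.
Proof. by move=> x1; apply/eqP => x0; move: x1; rewrite x0 dotp0l => /eqP; rewrite eq_sym oner_eq0. Qed.

Lemma unit_dotp1_eq x y : dotp x x = 1 -> dotp y y = 1 -> dotp x y = 1 -> x = y.
Proof.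
move=> x1 y1 xy; apply/eqP; rewrite -subr_eq0; apply/eqP; apply: dotp_eq0.
by rewrite dotpBl !dotpBr x1 y1 xy (dotpC y x) xy; lra.
Qed.

Lemma unit_dotp_bound x y : dotp x x = 1 -> dotp y y = 1 -> -1 <= dotp x y <= 1.
Proof. by move=> x1 y1; have := dotp_sqr_le x y; rewrite x1 y1 mulr1 => ?; apply/andP; split; nra. Qed.

End Dotp.

Section Trig.
Variable R : realType.
Implicit Types u v e t : R.

Lemma acos_ltE u v : -1 <= u <= 1 -> -1 <= v <= 1 -> (acos u < acos v) = (v < u).
Proof. by move=> ? ?; rewrite -ltr_cos ?acosK ?in_itv //= ?acos_ge0 ?acos_lepi. Qed.

Lemma acos_leE u v : -1 <= u <= 1 -> -1 <= v <= 1 -> (acos u <= acos v) = (v <= u).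
Proof. by move=> ? ?; rewrite !leNgt acos_ltE. Qed.

Lemma cos_itv t : -1 <= cos t <= 1.
Proof. by rewrite cos_geN1 cos_le1. Qed.

Lemma min_pi_itv e : 0 < e -> 0 <= Num.min e pi <= pi.
Proof. by move=> e0; rewrite le_min ltW // pi_ge0 ge_min lexx orbT. Qed.

(* Truncating at [pi] lets [e] be an arbitrary positive radius. *)
Lemma acos_lt_of_cos_lt v e : -1 <= v <= 1 -> 0 < e -> cos (Num.min e pi) < v -> acos v < e.
Proof.
move=> v1 e0 ev; have epi := min_pi_itv e0.
have : acos v < acos (cos (Num.min e pi)) by rewrite acos_ltE // cos_itv.
by rewrite cosK ?in_itv //= => /lt_le_trans; apply; rewrite ge_min lexx.
Qed.

Lemma cos_min_pi_lt1 e : 0 < e -> cos (Num.min e pi) < 1.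
Proof.
move=> e0; rewrite -cos0 ltr_cos ?in_itv //= ?lexx ?pi_ge0 ?min_pi_itv //.
by rewrite lt_min e0 pi_gt0.
Qed.

End Trig.

(* For unit vectors at angle acos c, the unit vector al x + be y (al, be >= 0)
   is at least as close to x as y is. *)
Lemma pos_comb_cos_ge (R : realType) (c al be : R) : -1 < c < 1 ->
  0 <= al -> 0 <= be -> al ^+ 2 + 2 * al * be * c + be ^+ 2 = 1 ->
  c <= al + be * c.
Proof.
move=> /andP[cN1 c1] al0 be0 unit; rewrite leNgt; apply/negP => lt_cw.
have cw2 : (al + be * c) ^+ 2 + be ^+ 2 * (1 - c ^+ 2) = 1.
  by rewrite -[RHS]unit; ring.
have c2 : 0 < 1 - c ^+ 2 by nra.
have [c0|c0] := lerP c 0.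
  have : c ^+ 2 < (al + be * c) ^+ 2.
    have : 0 < (c - (al + be * c)) * - (c + (al + be * c)) by apply: mulr_gt0; lra.
    nra.
  have be2 : be ^+ 2 < 1 by nra.
  have : be < 1 by rewrite -(@expr_lt1 _ 2).
  nra.
have bec : 0 <= be * c by exact: mulr_ge0 (ltW c0).
have : (al + be * c) ^+ 2 <= c * (al + be * c) by rewrite expr2; apply: ler_wpM2r; lra.
have : c * (al + be * c) <= c ^+ 2 by rewrite expr2; apply: ler_wpM2l; lra.
have be1 : be < 1 by nra.
have : be ^+ 2 < 1 by nra.
nra.
Qed.

Section Geodesic.
Variables (R : realType) (n : nat).
Implicit Types (x y : 'rV[R]_(n.+1)) (al be : R).

Lemma geod_seg_pos_comb x y al be :
  dotp x x = 1 -> dotp y y = 1 -> x != y -> -1 < dotp x y ->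
  0 <= al -> 0 <= be -> dotp (al *: x + be *: y) (al *: x + be *: y) = 1 ->
  geod_seg x y (al *: x + be *: y).
Proof.
move=> x1 y1 xy cN1 al0 be0 w1.
rewrite /geod_seg /= (negbTE xy).
set c := dotp x y in cN1 *.
have c1 : c < 1.
  rewrite lt_neqAle; have /andP[_ ->] := unit_dotp_bound x1 y1; rewrite andbT.
  by apply: contra xy => /eqP/(unit_dotp1_eq x1 y1) ->.
have c_itv : -1 <= c <= 1 by rewrite !ltW.
have unit : al ^+ 2 + 2 * al * be * c + be ^+ 2 = 1.
  by rewrite -[RHS]w1 !dotpDl !dotpDr !dotpZl !dotpZr x1 y1 (dotpC y x) -/c; ring.
set cw := al + be * c.
have cw_itv : -1 <= cw <= 1.
  have <- : dotp (al *: x + be *: y) x = cw.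
    by rewrite dotpDl !dotpZl x1 (dotpC y x) -/c mulr1.
  exact: unit_dotp_bound.
have c_cw : c <= cw by apply: pos_comb_cos_ge; rewrite ?cN1.
set th := sdist x y; set ph := acos cw.
have th0 : 0 < th by rewrite acos_gt0 // ltW //= c1.
have thpi : th < pi by rewrite acos_ltpi // ltW //= cN1.
have ph0 : 0 <= ph by rewrite acos_ge0.
have ph_th : ph <= th by rewrite /ph /th /sdist acos_leE.
have sin_th : sin th = Num.sqrt (1 - c ^+ 2) by rewrite sin_acos.
have sin_ph : sin ph = be * sin th.
  rewrite /ph sin_acos // sin_th.
  have -> : 1 - cw ^+ 2 = be ^+ 2 * (1 - c ^+ 2) by rewrite /cw; nra.
  by rewrite sqrtrM ?sqr_ge0 // sqrtr_sqr ger0_norm.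
have sin_th0 : 0 < sin th by apply: sin_gt0_pi; rewrite th0 thpi.
exists (ph / th); split.
  by apply/andP; split; [rewrite divr_ge0 // ltW | rewrite ler_pdivrMr // mul1r].
have -> : (1 - ph / th) * th = th - ph by field; rewrite gt_eqF.
have -> : ph / th * th = ph by field; rewrite gt_eqF.
rewrite sinB sin_ph acosK ?in_itv // acosK ?in_itv // -/c.
by congr (_ *: _ + _ *: _); rewrite /cw; field; rewrite gt_eqF.
Qed.

End Geodesic.

Section Cone.
Variables (R : realType) (n : nat) (C : set 'rV[R]_(n.+1)).
Hypothesis CS : C `<=` @sphere R n.
Implicit Types (v w x y z p q : 'rV[R]_(n.+1)) (a c r s t : R).

Definition cone v := v != 0 /\ C (normalize v).

(* the open cap {z | c < z.x}, of angular radius acos c around x *)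
Definition has_cap x c := forall z, sphere z -> c < dotp z x -> C z.

Definition ball_in_cone p r :=
  forall w, w != 0 -> dotp (w - p) (w - p) < r ^+ 2 -> cone w.

Lemma cone_mem x : C x -> cone x.
Proof.
by move=> Cx; have xx : dotp x x = 1 := CS Cx; split; rewrite ?normalize_id ?unit_dotp_neq0.
Qed.

Lemma coneZ a v : 0 < a -> cone v -> cone (a *: v).
Proof. by move=> a0 [v0 Cv]; rewrite /cone normalizeZ // scaler_eq0 negb_or gt_eqF. Qed.

Lemma has_cap_le x c c' : c <= c' -> has_cap x c -> has_cap x c'.
Proof. by move=> cc' capx z z1 zx; apply: capx => //; lra. Qed.

Lemma has_cap_mem x c : sphere x -> c < 1 -> has_cap x c -> C x.
Proof. by move=> x1 c1; apply; rewrite // (x1 : dotp x x = 1). Qed.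

Lemma ball_in_coneZ p r a : 0 < a -> ball_in_cone p r -> ball_in_cone (a *: p) (a * r).
Proof.
move=> a0 ballp w w0 wp; have a0' : a != 0 by rewrite gt_eqF.
rewrite -[w](scalerKV a0'); apply/coneZ/ballp => //.
  by rewrite scaler_eq0 negb_or invr_eq0 a0'.
rewrite -[p](scalerK a0') -scalerBr dotpZl dotpZr.
have -> : r ^+ 2 = a^-1 * (a^-1 * (a * r) ^+ 2) by field; rewrite gt_eqF.
by rewrite !ltr_pM2l ?invr_gt0.
Qed.

(* The ball contains [e *: z] for every unit [z] and every small [e > 0]. *)
Lemma ball_in_cone_sphere p r : ball_in_cone p r -> dotp p p < r ^+ 2 ->
  @sphere R n `<=` C.
Proof.
move=> ballp pr z z1; have zz : dotp z z = 1 := z1.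
set P := dotp p p in pr; set dl := r ^+ 2 - P.
have dl0 : 0 < dl by rewrite subr_gt0.
have P0 : 0 <= P := dotp_ge0 p.
set e := dl / (dl + 3 + 2 * P).
have e0 : 0 < e by rewrite divr_gt0 //; lra.
have e1 : e < 1 by rewrite ltr_pdivrMr ?mul1r; lra.
have eM : e * (3 + 2 * P) < dl by rewrite /e mulrAC ltr_pdivrMr; nra.
have zp : `|dotp z p| <= 1 + P.
  have := dotp_sqr_le z p; rewrite zz mul1r -/P.
  have [|zp1] := lerP `|dotp z p| 1; first lra.
  have : `|dotp z p| <= dotp z p ^+ 2.
    by rewrite -real_normK ?num_real // expr2 ler_peMr // ltW.
  lra.
have [_] : cone (e *: z).
  apply: ballp; first by rewrite scaler_eq0 negb_or gt_eqF // unit_dotp_neq0.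
  rewrite dotpBl !dotpBr !dotpZl !dotpZr zz (dotpC p) -/P.
  have : - `|dotp z p| <= dotp z p by rewrite lerNl -normrN ler_norm.
  have : e * `|dotp z p| <= e * (1 + P) by rewrite ler_pM2l.
  rewrite /dl in eM; nra.
by rewrite normalizeZ // normalize_id.
Qed.

Lemma has_cap_ball x c : sphere x -> -1 <= c <= 1 -> has_cap x c ->
  ball_in_cone x (Num.sqrt (1 - c ^+ 2)).
Proof.
move=> x1 c1 capx w w0 wx; have xx : dotp x x = 1 := x1.
rewrite sqr_sqrtr in wx; last by nra.
split => //; apply: capx; first exact: dotp_normalize.
have vw0 := vnorm_gt0 w0; have vw2 := vnorm_sqr w.
rewrite /normalize dotpZl ltr_pdivlMl // mulrC.
rewrite dotpBl !dotpBr xx (dotpC x w) in wx.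
have := sqr_ge0 (vnorm w - c); nra.
Qed.

Lemma ball_has_cap x r : sphere x -> 0 <= r <= 1 -> ball_in_cone x r ->
  has_cap x (Num.sqrt (1 - r ^+ 2)).
Proof.
move=> x1 r1 ballx z z1 zx; have xx : dotp x x = 1 := x1; have zz : dotp z z = 1 := z1.
have r2 : 0 <= 1 - r ^+ 2 by nra.
have := sqrtr_ge0 (1 - r ^+ 2); have := sqr_sqrtr r2.
move: zx; set c := Num.sqrt _; set l := dotp z x => zx c2 c0.
have [_] : cone (l *: z).
  apply: ballx; first by rewrite scaler_eq0 negb_or gt_eqF ?unit_dotp_neq0 //; lra.
  rewrite dotpBl !dotpBr !dotpZl !dotpZr zz xx (dotpC x z) -/l; nra.
by rewrite normalizeZ ?normalize_id //; lra.
Qed.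

Hypothesis Ccvx : sconvex C.

(* Spherical convexity of [C] is convexity of the cone over it. *)
Lemma coneD v w : cone v -> cone w -> v + w != 0 -> cone (v + w).
Proof.
move=> [v0 Cx] [w0 Cy] vw0; split => //.
set x := normalize v in Cx; set y := normalize w in Cy.
have xx : dotp x x = 1 := dotp_normalize v0.
have yy : dotp y y = 1 := dotp_normalize w0.
have vx := vnorm_scale_normalize v0; have wy := vnorm_scale_normalize w0.
have gv := vnorm_gt0 v0; have gw := vnorm_gt0 w0.
have vwE : v + w = vnorm v *: x + vnorm w *: y by rewrite vx wy.
have [exy|nxy] := eqVneq x y.
  by rewrite vwE -exy -scalerDl normalizeZ ?normalize_id //; lra.
have [xyN1|xyN1] := eqVneq (dotp x y) (-1).
  have yNx : y = - x.
    apply: unit_dotp1_eq => //; first by rewrite dotpNl dotpNr opprK.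
    by rewrite dotpNr dotpC xyN1 opprK.
  move: vw0; rewrite vwE yNx scalerN -scaleNr -scalerDl => vw0.
  have [vw|wv] := ltrP (vnorm w) (vnorm v).
    by rewrite normalizeZ ?subr_gt0 // normalize_id.
  have {}wv : vnorm v < vnorm w.
    by rewrite lt_neqAle wv andbT; apply: contraNneq vw0 => ->; rewrite subrr scale0r.
  have -> : (vnorm v - vnorm w) *: x = (vnorm w - vnorm v) *: - x.
    by rewrite scalerN -scaleNr opprB.
  by rewrite normalizeZ ?subr_gt0 // -yNx normalize_id.
have xy_itv := unit_dotp_bound xx yy.
have xyN1' : -1 < dotp x y by rewrite lt_neqAle eq_sym xyN1; case/andP: xy_itv.
have xy_pi : sdist x y < pi by rewrite /sdist acos_ltpi // xyN1'; case/andP: xy_itv.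
apply: (Ccvx.2 x y Cx Cy xy_pi).
have gvw := vnorm_gt0 vw0.
have vwN : normalize (v + w) =
    (vnorm v / vnorm (v + w)) *: x + (vnorm w / vnorm (v + w)) *: y.
  by rewrite /normalize {2}vwE scalerDr !scalerA (mulrC _ (vnorm v)) (mulrC _ (vnorm w)).
rewrite vwN; apply: geod_seg_pos_comb; rewrite ?divr_ge0 ?ltW //.
by rewrite -vwN dotp_normalize.
Qed.

Lemma ball_in_coneD p q s t : 0 < s -> 0 < t ->
  ball_in_cone p s -> ball_in_cone q t -> ball_in_cone (p + q) (s + t).
Proof.
move=> s0 t0 ballp ballq w w0 wpq.
set d := w - (p + q); set l := s / (s + t).
have st0 : s + t != 0 by rewrite gt_eqF // addr_gt0.
have l0 : 0 < l by rewrite divr_gt0 // addr_gt0.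
have l1 : 0 < 1 - l by rewrite subr_gt0 ltr_pdivrMr ?mul1r ?addr_gt0 //; lra.
set a := p + l *: d; set b := q + (1 - l) *: d.
have abw : a + b = w by rewrite /a /b /d; apply/rowP => i; rewrite !mxE; ring.
have shrink k r : 0 < k -> k * (s + t) = r -> dotp (k *: d) (k *: d) < r ^+ 2.
  by move=> k0 <-; rewrite dotpZl dotpZr exprMn mulrA -expr2 ltr_pM2l ?exprn_gt0.
have ap : dotp (a - p) (a - p) < s ^+ 2.
  by rewrite /a addrC addKr shrink // /l mulfVK.
have bq : dotp (b - q) (b - q) < t ^+ 2.
  by rewrite /b addrC addKr shrink // /l mulrBl mul1r mulfVK // addrC addKr.
have [a0|a0] := eqVneq a 0.
  have wb : w = b by rewrite -abw a0 add0r.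
  by rewrite wb; apply: ballq; rewrite // -wb.
have [b0|b0] := eqVneq b 0.
  have wa : w = a by rewrite -abw b0 addr0.
  by rewrite wa; apply: ballp; rewrite // -wa.
by rewrite -abw; apply: coneD; [exact: ballp | exact: ballq | rewrite abw].
Qed.

Lemma ball_in_cone_shift p r y t : 0 < t -> C y -> ball_in_cone p r ->
  ball_in_cone (p + t *: y) r.
Proof.
move=> t0 Cy ballp w w0 wp; rewrite -[w](subrK (t *: y)).
have [->|wy0] := eqVneq (w - t *: y) 0; first by rewrite add0r; apply/coneZ/cone_mem.
apply: coneD; rewrite ?subrK //; last exact/coneZ/cone_mem.
by apply: ballp; rewrite // (_ : w - t *: y - p = w - (p + t *: y)) // opprD addrA addrAC.
Qed.

End Cone.

(* The point of the arc from [x] to [z] where it leaves [C] for good is a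
   boundary point, and it is at least as close to [x] as [z] is. *)
Section BoundaryOnArc.
Variables (R : realType) (n : nat) (C : set 'rV[R]_(n.+1)).
Hypotheses (CS : C `<=` @sphere R n) (Ccl : sclosed C).
Variables (x z : 'rV[R]_(n.+1)).
Hypotheses (Cx : C x) (z1 : sphere z) (Cz : ~ C z) (zxN1 : -1 < dotp z x).

Let a := dotp z x.
Let xx : dotp x x = 1 := CS Cx.
Let zz : dotp z z = 1 := z1.
Let xz : dotp x z = a. Proof. by rewrite dotpC. Qed.

Let a1 : a < 1.
Proof.
rewrite lt_neqAle; have /andP[_ ->] := unit_dotp_bound zz xx; rewrite andbT.
by apply/eqP => /(unit_dotp1_eq zz xx) zx; apply: Cz; rewrite zx.
Qed.

Let w t := (1 - t) *: x + t *: z.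
Let q t := dotp (w t) (w t).

Let dotp_w s t :
  dotp (w s) (w t) = (1 - s) * (1 - t) + ((1 - s) * t + s * (1 - t)) * a + s * t.
Proof. by rewrite !dotpDl !dotpDr !dotpZl !dotpZr xx zz xz (dotpC z x) xz; ring. Qed.

Let q_ge t : 0 <= t <= 1 -> (1 + a) / 2 <= q t.
Proof.
move=> /andP[t0 t1]; rewrite /q dotp_w; have := a1; have := zxN1; rewrite -/a => ? ?.
have : 0 <= (1 - a) * (2 * t - 1) ^+ 2 by apply: mulr_ge0; [lra | exact: sqr_ge0].
nra.
Qed.

Let q_gt0 t : 0 <= t <= 1 -> 0 < q t.
Proof. by move=> /q_ge; have := zxN1; rewrite -/a; lra. Qed.

Let w_neq0 t : 0 <= t <= 1 -> w t != 0.
Proof. by move=> /q_gt0; rewrite /q; apply: contraTneq => ->; rewrite dotp0l ltxx. Qed.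

Let p t := normalize (w t).

Let p1 t : 0 <= t <= 1 -> dotp (p t) (p t) = 1.
Proof. by move=> /w_neq0/dotp_normalize. Qed.

Let p_at0 : p 0 = x.
Proof. by rewrite /p /w subr0 scale1r scale0r addr0 normalize_id. Qed.

Let p_at1 : p 1 = z.
Proof. by rewrite /p /w subrr scale0r scale1r add0r normalize_id. Qed.

Let dotp_p s t : 0 <= s <= 1 -> 0 <= t <= 1 ->
  dotp (p s) (p t) = dotp (w s) (w t) / (Num.sqrt (q s) * Num.sqrt (q t)).
Proof.
move=> s01 t01; rewrite /p /normalize /vnorm dotpZl dotpZr -/(q s) -/(q t).
by rewrite invfM; field; rewrite !gt_eqF // sqrtr_gt0 q_gt0.
Qed.

Let p_close s t : 0 <= s <= 1 -> 0 <= t <= 1 -> (s - t) ^+ 2 <= (1 + a) / 8 ->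
  1 - 8 * (s - t) ^+ 2 / (1 + a) <= dotp (p s) (p t).
Proof.
have := a1; have := zxN1; rewrite -/a => aN1 a1' s01 t01 st.
have qs := q_ge s01; have qt := q_ge t01.
set P := dotp (p s) (p t).
have P1 : P <= 1 by case/andP: (unit_dotp_bound (p1 s01) (p1 t01)).
have gram : q s * q t - dotp (w s) (w t) ^+ 2 = (1 - a ^+ 2) * (s - t) ^+ 2.
  by rewrite /q !dotp_w; ring.
have W0 : 0 < dotp (w s) (w t).
  have -> : dotp (w s) (w t) = (q s + q t - 2 * (1 - a) * (s - t) ^+ 2) / 2.
    by rewrite /q !dotp_w; field.
  by apply: divr_gt0 => //; nra.
have qq0 : 0 < q s * q t by rewrite mulr_gt0 ?q_gt0.
have P0 : 0 < P by rewrite /P dotp_p // divr_gt0 // mulr_gt0 // sqrtr_gt0 q_gt0.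
have P2 : P ^+ 2 = 1 - (1 - a ^+ 2) * (s - t) ^+ 2 / (q s * q t).
  rewrite /P dotp_p // expr_div_n exprMn !sqr_sqrtr ?ltW ?q_gt0 //.
  by rewrite -gram; field; rewrite !gt_eqF ?q_gt0.
have qq : (1 + a) ^+ 2 / 4 <= q s * q t.
  have -> : (1 + a) ^+ 2 / 4 = (1 + a) / 2 * ((1 + a) / 2) by field.
  by apply: ler_pM => //; lra.
have : (1 - a ^+ 2) * (s - t) ^+ 2 / (q s * q t) <= 8 * (s - t) ^+ 2 / (1 + a).
  rewrite ler_pdivrMr // mulrAC ler_pdivlMr; last lra.
  have st0 := sqr_ge0 (s - t).
  have : 8 * (s - t) ^+ 2 * ((1 + a) ^+ 2 / 4) <= 8 * (s - t) ^+ 2 * (q s * q t).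
    by apply: ler_wpM2l => //; rewrite mulr_ge0.
  have : (1 - a ^+ 2) * (s - t) ^+ 2 * (1 + a) <= 8 * (s - t) ^+ 2 * ((1 + a) ^+ 2 / 4).
    have -> : 8 * (s - t) ^+ 2 * ((1 + a) ^+ 2 / 4) = (s - t) ^+ 2 * ((1 + a) ^+ 2 * 2).
      by field.
    have -> : (1 - a ^+ 2) * (s - t) ^+ 2 * (1 + a) = (s - t) ^+ 2 * ((1 + a) ^+ 2 * (1 - a)).
      by ring.
    by apply: ler_wpM2l => //; apply: ler_wpM2l; [exact: sqr_ge0 | lra].
  lra.
have : P ^+ 2 <= P by rewrite expr2 ger_pMl.
lra.
Qed.

Let S := [set t : R | 0 <= t <= 1 /\ C (p t)].
Let S0 : S 0. Proof. by split; [rewrite lexx ler01 | rewrite p_at0]. Qed.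
Let S_sup : has_sup S. Proof. by split; [exists 0 | exists 1 => t [/andP[]]]. Qed.
Let T := sup S.
Let T01 : 0 <= T <= 1.
Proof. by rewrite (sup_upper_bound S_sup S0) /= ge_sup //; [exists 0 | move=> t [/andP[]]]. Qed.

Let b := p T.

(* a parameter radius keeping [p t] within distance [e] of [b] *)
Let rad e := Num.min (Num.min ((1 + a) / 8) ((1 - cos (Num.min e pi)) * (1 + a) / 8)) 1.

Let rad_gt0 e : 0 < e -> 0 < rad e.
Proof.
move=> e0; have := cos_min_pi_lt1 e0; have := zxN1; rewrite -/a => ? ?.
by rewrite !lt_min ltr01 andbT !divr_gt0 ?mulr_gt0 ?subr_gt0 //; lra.
Qed.

Let sdist_b_lt e t : 0 < e -> 0 <= t <= 1 -> `|t - T| < rad e -> sdist b (p t) < e.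
Proof.
move=> e0 t01 tT; have := zxN1; rewrite -/a => aN1.
have r0 := rad_gt0 e0.
have r1 : rad e <= 1 by rewrite ge_min lexx orbT.
have r2 : rad e <= (1 + a) / 8 by rewrite !ge_min lexx.
have r3 : rad e <= (1 - cos (Num.min e pi)) * (1 + a) / 8 by rewrite !ge_min lexx orbT.
have sq : (T - t) ^+ 2 < rad e.
  rewrite -normrN opprB in tT.
  by rewrite -real_normK ?num_real //; have := normr_ge0 (T - t); nra.
have close := p_close T01 t01 (le_trans (ltW sq) r2).
apply: (acos_lt_of_cos_lt _ e0); first exact: unit_dotp_bound (p1 _) (p1 _).
have : 8 * (T - t) ^+ 2 / (1 + a) < 1 - cos (Num.min e pi).
  by rewrite ltr_pdivrMr; [have := cos_min_pi_lt1 e0; nra | lra].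
lra.
Qed.

Let Cb : C b.
Proof.
apply: Ccl; first exact: p1.
move=> e e0; have [t [t01 Ct] tT] := sup_adherent (rad_gt0 e0) S_sup.
exists (p t); split => //; apply: sdist_b_lt => //.
have tle : t <= T by exact: sup_upper_bound S_sup _ (conj t01 Ct).
by rewrite ler0_norm ?subr_le0 //; move: tT; rewrite -/T; lra.
Qed.

Let T_lt1 : T < 1.
Proof.
rewrite lt_neqAle; case/andP: T01 => _ ->; rewrite andbT.
by apply/eqP => T1; apply: Cz; rewrite -p_at1 -T1.
Qed.

Let boundary_b : sboundary C b.
Proof.
split; first exact: p1.
move=> e e0; split; first by exists b; split; [exact: Cb | rewrite /sdist p1 // acos1].
have r0 := rad_gt0 e0; have := T_lt1; case/andP: T01 => T0 _ T1.
set t := Num.min 1 (T + rad e / 2).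
have tT : T < t by rewrite lt_min T1 /=; lra.
have t01 : 0 <= t <= 1 by rewrite ge_min lexx le_min ler01 /=; lra.
exists (p t); split; first exact: p1.
split.
  by move=> Ct; move: tT; rewrite ltNge (sup_upper_bound S_sup) //; split.
apply: sdist_b_lt => //; rewrite gtr0_norm ?subr_gt0 //.
have : t <= T + rad e / 2 by rewrite ge_min lexx orbT.
lra.
Qed.

Let b_closer : a <= dotp x b.
Proof.
have := zxN1; rewrite -/a => aN1; have := a1.
case/andP: T01 => T0 T1 a1'.
have qT := q_gt0 T01.
set L := dotp x (w T).
have -> : dotp x b = L / Num.sqrt (q T) by rewrite /b /p /normalize dotpZr mulrC.
have LE : L = 1 - T + T * a by rewrite /L /w dotpDr !dotpZr xx xz; ring.
have sq0 : 0 < Num.sqrt (q T) by rewrite sqrtr_gt0.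
rewrite ler_pdivlMr //.
have qE : q T = (1 - T) ^+ 2 + 2 * T * (1 - T) * a + T ^+ 2 by rewrite /q dotp_w; ring.
have key : L ^+ 2 - a ^+ 2 * q T = (1 - T) * (1 - a ^+ 2) * (1 - T + 2 * T * a).
  by rewrite LE qE; ring.
have a2 : 0 <= 1 - a ^+ 2 by nra.
have sqa : Num.sqrt (a ^+ 2 * q T) = `|a| * Num.sqrt (q T).
  by rewrite sqrtrM ?sqr_ge0 // sqrtr_sqr.
have [a0|a0] := lerP 0 a.
  have aL : a <= L by rewrite LE; nra.
  rewrite -(ger0_norm a0) -sqa -(ger0_norm (le_trans a0 aL)) -sqrtr_sqr.
  rewrite ler_sqrt ?sqr_ge0 // -subr_ge0 key.
  by apply: mulr_ge0; [apply: mulr_ge0 | nra]; lra.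
have [L0|L0] := lerP 0 L; first by nra.
have : Num.sqrt (L ^+ 2) <= Num.sqrt (a ^+ 2 * q T).
  rewrite ler_sqrt; last by rewrite mulr_ge0 ?sqr_ge0 // ltW.
  rewrite -subr_le0 key.
  have : 1 - T + 2 * T * a < 0 by rewrite LE in L0; nra.
  have : 0 <= (1 - T) * (1 - a ^+ 2) by apply: mulr_ge0; lra.
  nra.
by rewrite sqa sqrtr_sqr ltr0_norm // ltr0_norm //; nra.
Qed.

Lemma boundary_point_toward : exists b, sboundary C b /\ dotp z x <= dotp x b.
Proof. by exists b; split; [exact: boundary_b | exact: b_closer]. Qed.

End BoundaryOnArc.

Lemma sdist_xx (R : realType) (n : nat) (x : 'rV[R]_(n.+1)) : sphere x -> sdist x x = 0.
Proof. by move=> x1; rewrite /sdist (x1 : dotp x x = 1) acos1. Qed.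

Section CapsAndBoundary.
Variables (R : realType) (n : nat) (C : set 'rV[R]_(n.+1)).
Hypotheses (CS : C `<=` @sphere R n) (Ccl : sclosed C).
Implicit Types (x y z b : 'rV[R]_(n.+1)) (c : R).

Lemma has_cap_boundary_dotp_le x c b : sphere x -> has_cap C x c -> sboundary C b ->
  dotp x b <= c.
Proof.
move=> x1 capx [b1 Bb]; have xx : dotp x x = 1 := x1; have bb : dotp b b = 1 := b1.
rewrite leNgt; apply/negP => cxb; set dl := dotp x b - c in cxb.
set et := Num.min (dl ^+ 2 / 4) 1.
have et0 : 0 < et by rewrite lt_min ltr01 andbT divr_gt0 // exprn_gt0 // subr_gt0.
have et_dl : et <= dl ^+ 2 / 4 by rewrite ge_min lexx.
have et1 : et <= 1 by rewrite ge_min lexx orbT.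
have et_itv : -1 <= 1 - et <= 1 by apply/andP; split; lra.
have et_acos : 0 < acos (1 - et) by apply: acos_gt0; apply/andP; split; lra.
have [_ [z [z1 [Cz bz]]]] := Bb _ et_acos.
have zz : dotp z z = 1 := z1.
have {}bz : 1 - et < dotp b z by rewrite -(acos_ltE (unit_dotp_bound bb zz) et_itv).
apply: Cz; apply: capx => //.
have : (dotp z x - dotp x b) ^+ 2 <= 2 - 2 * dotp b z.
  have := dotp_sqr_le (z - b) x.
  by rewrite xx mulr1 !dotpBl !dotpBr zz bb (dotpC z b) (dotpC b x); lra.
rewrite /dl in cxb et_dl; nra.
Qed.

Lemma boundary_dotp_gt x c : C x -> -1 <= c -> ~ has_cap C x c ->
  exists b, sboundary C b /\ c < dotp x b.
Proof.
move=> Cx cN1 /existsNP[z /not_implyP[z1 /not_implyP[cz Cz]]].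
have [b [Bb zxb]] := boundary_point_toward CS Ccl Cx z1 Cz (le_lt_trans cN1 cz).
by exists b; split => //; lra.
Qed.

Lemma has_cap_sdist_set x c : C x -> -1 <= c <= 1 ->
  has_cap C x c <-> ((acos c)%:E <= sdist_set x (sboundary C))%E.
Proof.
move=> Cx c_itv; have x1 := CS Cx; split => [capx|].
  apply: le_ereal_inf_tmp => _ [b Bb <-]; have b1 : dotp b b = 1 by case: Bb.
  rewrite lee_fin acos_leE ?unit_dotp_bound //.
  exact: has_cap_boundary_dotp_le capx Bb.
apply: contraPP => /(boundary_dotp_gt Cx (andP c_itv).1) [b [Bb cxb]].
have b1 : dotp b b = 1 by case: Bb.
apply/negP; rewrite -ltNge; apply: le_lt_trans (ereal_inf_lbound _) _; first by exists b.
by rewrite lte_fin acos_ltE ?unit_dotp_bound.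
Qed.

End CapsAndBoundary.

Section Hemisphere.
Variables (R : realType) (n : nat).
Implicit Types (C : set 'rV[R]_(n.+1)) (x y z p r b : 'rV[R]_(n.+1)) (c : R).

Lemma exists_unit_perp x p : dotp x x = 1 -> dotp p p = 1 -> p <> x -> p <> - x ->
  exists r, dotp r r = 1 /\ dotp r x = 0.
Proof.
move=> xx pp px pNx; set u := p - dotp p x *: x.
have ux : dotp u x = 0 by rewrite dotpBl dotpZl xx mulr1 subrr.
have u0 : u != 0.
  apply/eqP => u0; have : dotp u u = 0 by rewrite u0 dotp0l.
  rewrite dotpBl !dotpBr !dotpZl !dotpZr pp xx (dotpC x p) => /eqP.
  have -> : 1 - dotp p x * dotp p x - (dotp p x * dotp p x - dotp p x * (dotp p x * 1))
      = (1 - dotp p x) * (1 + dotp p x) by ring.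
  rewrite mulf_eq0 subr_eq0 addr_eq0 => /orP[/eqP pxE|/eqP pxE].
    by apply: px; apply: unit_dotp1_eq; rewrite // -pxE.
  by apply: pNx; apply: unit_dotp1_eq; rewrite ?dotpNl ?dotpNr ?opprK // -pxE.
exists (normalize u); split; first exact: dotp_normalize.
by rewrite /normalize dotpZl ux mulr0.
Qed.

Lemma exists_off_axis C x b : C `<=` @sphere R n -> C x -> sboundary C b -> b != x ->
  exists p, sphere p /\ p <> x /\ p <> - x.
Proof.
move=> CS Cx [b1 Bb] bx; have [bNx|bNx] := eqVneq b (- x); last first.
  by exists b; split => //; split; apply/eqP.
have xx : dotp x x = 1 := CS _ Cx.
have pi2 : 0 < pi / 2 :> R by rewrite divr_gt0 // pi_gt0.
have [[y [Cy dy]] [z [z1 [Cz dz]]]] := Bb _ pi2.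
have far p : sdist b p < pi / 2 -> p <> x.
  by move=> + px; rewrite px bNx /sdist dotpNl xx acosN1; have := pi_gt0 R; lra.
have [CNx|CNx] := pselect (C (- x)).
  by exists z; split => //; split => [zx|zNx]; apply: Cz; rewrite ?zx ?zNx.
exists y; split; first exact: CS.
by split; [exact: far | move=> yNx; apply: CNx; rewrite -yNx].
Qed.

End Hemisphere.

Lemma has_cap_perp (R : realType) (n : nat) (C : set 'rV[R]_(n.+1)) x r c :
  sphere x -> has_cap C x c -> -1 <= c < 0 -> sphere r -> dotp r x = 0 ->
  has_cap C r (1 - c ^+ 2 / 4).
Proof.
move=> x1 capx /andP[cN1 c0] r1 rx v v1 vr.
have xx : dotp x x = 1 := x1; have rr : dotp r r = 1 := r1; have vv : dotp v v = 1 := v1.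
apply: capx => //.
have vx_vr : dotp v x ^+ 2 <= 2 - 2 * dotp v r.
  have := dotp_sqr_le (v - r) x.
  by rewrite xx mulr1 !dotpBl !dotpBr vv rr rx subr0 (dotpC r v); lra.
rewrite ltNge; apply/negP => vxc.
have : c ^+ 2 <= dotp v x ^+ 2 by nra.
nra.
Qed.

Section NoCapBeyondHemisphere.
Variables (R : realType) (n : nat) (C : set 'rV[R]_(n.+1)).
Hypotheses (CS : C `<=` @sphere R n) (Cne : C <> @sphere R n) (Ccvx : sconvex C).

Lemma not_sphere_sub : ~ (@sphere R n `<=` C).
Proof. by move=> SC; apply: Cne; apply/seteqP. Qed.

(* For a unit [r] orthogonal to [x], the cap around [x] contains caps of
   cosine [1 - c^2/4] around [r] and [-r]; their balls in the cone add up to a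
   ball around [0]. *)
Lemma no_cap_beyond_hemisphere x c : (exists b, sboundary C b) -> C x -> c < 0 ->
  ~ has_cap C x c.
Proof.
move=> [b Bb] Cx c0 capx; have x1 := CS Cx; have xx : dotp x x = 1 := x1.
set c' := Num.max c (-1).
have {}capx : has_cap C x c' by apply: has_cap_le capx; rewrite le_max lexx.
have c'_itv : -1 <= c' < 0 by rewrite le_max lexx orbT gt_max c0 ltrN10.
have bx : b != x.
  apply: contraPneq (has_cap_boundary_dotp_le x1 capx Bb) => ->.
  by rewrite xx; case/andP: c'_itv => _; lra.
have [p [p1 [px pNx]]] := exists_off_axis CS Cx Bb bx.
have [r [r1 rx]] := exists_unit_perp xx p1 px pNx.
have Nr1 : dotp (- r) (- r) = 1 by rewrite dotpNl dotpNr opprK.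
have Nrx : dotp (- r) x = 0 by rewrite dotpNl rx oppr0.
set c1 := 1 - c' ^+ 2 / 4.
have [c'N1 c'0] := andP c'_itv.
have c1_01 : 0 < c1 < 1 by apply/andP; split; rewrite /c1; nra.
have c1_itv : -1 <= c1 <= 1 by case/andP: c1_01 => ? ?; apply/andP; split; lra.
have s0 : 0 < Num.sqrt (1 - c1 ^+ 2) by case/andP: c1_01 => ? ?; rewrite sqrtr_gt0; nra.
have ball_r := has_cap_ball r1 c1_itv (has_cap_perp x1 capx c'_itv r1 rx).
have ball_Nr := has_cap_ball Nr1 c1_itv (has_cap_perp x1 capx c'_itv Nr1 Nrx).
have := ball_in_coneD Ccvx s0 s0 ball_r ball_Nr; rewrite subrr => ball0.
by apply: not_sphere_sub; apply: ball_in_cone_sphere ball0 _; rewrite dotp0l exprn_gt0 ?addr_gt0.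
Qed.

End NoCapBeyondHemisphere.

Section Inradius.
Variables (R : realType) (n : nat) (C : set 'rV[R]_(n.+1)).
Hypotheses (CS : C `<=` @sphere R n) (Cne : C <> @sphere R n).
Hypotheses (Ccvx : sconvex C) (Cint : sinterior C !=set0).
Implicit Types (x y v : 'rV[R]_(n.+1)) (c s : R).

Definition cap_cosines := [set c | 0 <= c /\ exists x, C x /\ has_cap C x c].

(* the cosine of the inradius of [C] *)
Definition inradius_cos := inf cap_cosines.

Lemma exists_mem : exists x, C x.
Proof. by case: Cint => x [x1 [e e0 xe]]; exists x; apply: xe; rewrite ?sdist_xx. Qed.

Lemma cap_cosines1 : cap_cosines 1.
Proof.
split => //; have [x Cx] := exists_mem; exists x; split => // z z1.
by have /andP[_ zx1] := unit_dotp_bound z1 (CS Cx); rewrite ltNge zx1.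
Qed.

Let cap_cosines_ge0 : lbound cap_cosines 0.
Proof. by move=> c []. Qed.

Lemma inradius_cos_ge0 : 0 <= inradius_cos.
Proof. by apply: lb_le_inf; [exists 1; exact: cap_cosines1 | exact: cap_cosines_ge0]. Qed.

Lemma inradius_cos_le c : cap_cosines c -> inradius_cos <= c.
Proof. by move=> Gc; apply: ge_inf => //; exists 0; exact: cap_cosines_ge0. Qed.

Lemma inradius_cos_lt1 : inradius_cos < 1.
Proof.
case: Cint => x [x1 [e e0 xe]]; have xx : dotp x x = 1 := x1.
set c := Num.max 0 (cos (Num.min e pi)).
have c1 : c < 1 by rewrite gt_max ltr01 cos_min_pi_lt1.
apply: le_lt_trans c1; apply: inradius_cos_le; split; first by rewrite le_max lexx.
exists x; split; first by apply: xe; rewrite ?sdist_xx.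
move=> z z1 zx; apply: xe => //; rewrite /sdist dotpC.
apply: acos_lt_of_cos_lt => //; first exact: unit_dotp_bound.
by apply: le_lt_trans zx; rewrite le_max lexx orbT.
Qed.

Lemma ball_in_cone_cap_cosine v s : 0 < s -> ball_in_cone C v s ->
  s ^+ 2 <= dotp v v /\ exists2 c, cap_cosines c & c ^+ 2 = 1 - s ^+ 2 / dotp v v.
Proof.
move=> s0 ballv.
have [vs|sv] := ltrP (dotp v v) (s ^+ 2).
  by exfalso; apply: (not_sphere_sub CS Cne); exact: ball_in_cone_sphere ballv vs.
split => //.
have v0 : v != 0 by apply: contraTneq sv => ->; rewrite dotp0l -ltNge exprn_gt0.
have nv0 := vnorm_gt0 v0; have nv2 := vnorm_sqr v.
have sv' : s <= vnorm v.
  by rewrite -(ger0_norm (ltW s0)) -sqrtr_sqr ler_sqrt ?sqr_ge0 ?dotp_ge0.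
set r := (vnorm v)^-1 * s.
have r01 : 0 <= r <= 1.
  apply/andP; split; first by rewrite mulr_ge0 ?invr_ge0 ?ltW.
  by rewrite /r mulrC ler_pdivrMr ?mul1r.
have nvV0 : 0 < (vnorm v)^-1 by rewrite invr_gt0.
have capN := ball_has_cap (dotp_normalize v0) r01 (ball_in_coneZ nvV0 ballv).
have r2 : 0 < r ^+ 2 by rewrite exprn_gt0 // mulr_gt0 ?invr_gt0.
have r21 : r ^+ 2 <= 1 by rewrite expr_le1 //; case/andP: r01.
exists (Num.sqrt (1 - r ^+ 2)).
  split; first exact: sqrtr_ge0.
  exists (normalize v); split => //.
  apply: has_cap_mem capN; first exact: dotp_normalize.
  by rewrite -[X in _ < X]sqrtr1 ltr_sqrt ?ltr01 //; lra.
by rewrite sqr_sqrtr ?subr_ge0 // /r exprMn exprVn nv2 mulrC.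
Qed.

(* Averaging two caps of cosine [c]: their balls add up to a ball around
   [x + y], whose depth is at least the inradius. *)
Lemma has_cap_dist x y c : C x -> C y -> inradius_cos <= c < 1 ->
  has_cap C x c -> has_cap C y c ->
  dotp (x - y) (x - y) * (1 - inradius_cos ^+ 2) <= 4 * (c ^+ 2 - inradius_cos ^+ 2).
Proof.
move=> Cx Cy /andP[sc c1] capx capy; have s0 := inradius_cos_ge0.
have x1 := CS Cx; have y1 := CS Cy.
have xx : dotp x x = 1 := x1; have yy : dotp y y = 1 := y1.
have c_itv : -1 <= c <= 1 by apply/andP; split; lra.
have cc : 0 < 1 - c ^+ 2 by nra.
set s := Num.sqrt (1 - c ^+ 2).
have s_gt0 : 0 < s by rewrite sqrtr_gt0.
have s2 : s ^+ 2 = 1 - c ^+ 2 by rewrite sqr_sqrtr // ltW.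
have ballxy := ball_in_coneD Ccvx s_gt0 s_gt0 (has_cap_ball x1 c_itv capx)
  (has_cap_ball y1 c_itv capy).
have [sN [c' Gc' c'E]] := ball_in_cone_cap_cosine (addr_gt0 s_gt0 s_gt0) ballxy.
have sc' := inradius_cos_le Gc'; case: Gc' => c'0 _.
set N := dotp (x + y) (x + y) in sN c'E.
have N0 : 0 < N by apply: lt_le_trans sN; rewrite exprn_gt0 // addr_gt0.
have -> : dotp (x - y) (x - y) = 4 - N.
  by rewrite /N !(dotpDl, dotpDr, dotpNl, dotpNr) xx yy (dotpC y x); ring.
have : inradius_cos ^+ 2 * N <= (1 - (s + s) ^+ 2 / N) * N.
  by rewrite ler_pM2r // -c'E; nra.
rewrite mulrBl mul1r mulfVK ?gt_eqF //.
have -> : (s + s) ^+ 2 = 4 * (1 - c ^+ 2) by rewrite -s2; ring.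
nra.
Qed.

End Inradius.

Section CoordinateBounds.
Variables (R : realType) (m : nat).
Implicit Types (u : nat -> 'rV[R]_m) (eta : nat -> R) (z v : 'rV[R]_m) (h : R).

Lemma exists_coord_limit u eta : (forall k, 0 <= eta k) ->
  (forall k j i, (k <= j)%N -> `|u k 0 i - u j 0 i| <= eta k) ->
  exists x : 'rV[R]_m, forall k i, `|x 0 i - u k 0 i| <= eta k.
Proof.
move=> eta0 cauchy; exists (\row_i sup (range (fun j => u j 0 i - eta j))) => k i.
rewrite mxE; set S := range (fun j => u j 0 i - eta j).
have ub : ubound S (u k 0 i + eta k).
  move=> _ [j _ <-]; have [kj|jk] := leqP k j.
    by have := eta0 j; have /ler_normlP[? ?] := cauchy k j i kj; lra.
  by have := eta0 k; have /ler_normlP[? ?] := cauchy j k i (ltnW jk); lra.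
have S_sup : has_sup S by split; [exists (u 0 0 i - eta 0); exists 0 | exists (u k 0 i + eta k)].
have : sup S <= u k 0 i + eta k by apply: ge_sup => //; case: S_sup.
have : u k 0 i - eta k <= sup S by apply: sup_upper_bound => //; exists k.
by move=> ? ?; apply/ler_normlP; split; lra.
Qed.

Lemma dotp_coord_bound v h : (forall i, `|v 0 i| <= h) -> dotp v v <= m%:R * h ^+ 2.
Proof.
move=> vh; rewrite -[m in m%:R]card_ord mulr_natl -sumr_const.
apply: ler_sum => i _; rewrite -expr2 -real_normK ?num_real //.
by have := vh i; have := normr_ge0 (v 0 i); nra.
Qed.

Lemma dotp_unit_coord_bound z v h : dotp z z = 1 -> (forall i, `|v 0 i| <= h) ->
  `|dotp z v| <= m%:R * h.
Proof.
move=> zz vh; apply: le_trans (ler_norm_sum _ _ _) _.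
rewrite -[m in m%:R]card_ord mulr_natl -sumr_const; apply: ler_sum => i _; rewrite normrM.
have : `|z 0 i| <= 1.
  have := coord_sqr_le_dotp z i; rewrite zz -real_normK ?num_real // => zi.
  by have := normr_ge0 (z 0 i); nra.
by have := vh i; have := normr_ge0 (z 0 i); have := normr_ge0 (v 0 i); nra.
Qed.

End CoordinateBounds.

Section Incenter.
Variables (R : realType) (n : nat) (C : set 'rV[R]_(n.+1)).
Hypotheses (CS : C `<=` @sphere R n) (Cne : C <> @sphere R n) (Ccl : sclosed C).
Hypotheses (Ccvx : sconvex C) (Cint : sinterior C !=set0).
Implicit Types (u : nat -> 'rV[R]_(n.+1)) (x z : 'rV[R]_(n.+1)) (k j : nat) (e : R).

Let s := inradius_cos C.
Let s0 : 0 <= s := inradius_cos_ge0 CS Cint.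
Let s1 : s < 1 := inradius_cos_lt1 Cint.

(* [ck k] decreases to [s]; by [has_cap_dist], centres of caps of cosines
   [ck k] and [ck j] (k <= j) are within Euclidean distance [eta k]. *)
Let ck k := s + (1 - s) / k.+2%:R.
Let eta k := Num.sqrt (8 / k.+2%:R : R).

Let ck_gt k : s < ck k.
Proof. by rewrite ltrDl divr_gt0 // subr_gt0. Qed.

Let ck_lt1 k : ck k < 1.
Proof.
have : (1 - s) / k.+2%:R < 1 - s by rewrite ltr_pdivrMr // ltr_pMr ?subr_gt0 // ltr1n.
by rewrite /ck; set t := (1 - s) / _; lra.
Qed.

Let ck_anti k j : (k <= j)%N -> ck j <= ck k.
Proof. by move=> kj; rewrite lerD2l ler_pM2l ?subr_gt0 // lef_pV2 ?posrE // ler_nat. Qed.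

Let eta_ge0 k : 0 <= eta k. Proof. exact: sqrtr_ge0. Qed.

Let eta_sqr k : eta k ^+ 2 = 8 / k.+2%:R.
Proof. by rewrite sqr_sqrtr // divr_ge0 // ler0n. Qed.

Let eta_le2 k : eta k <= 2.
Proof.
have : 8 / k.+2%:R <= 4 :> R.
  rewrite ler_pdivrMr //; have : 2 <= k.+2%:R :> R by rewrite ler_nat.
  lra.
by rewrite -eta_sqr; have := eta_ge0 k; nra.
Qed.

Let ck_eta k : ck k - s <= eta k.
Proof.
have : ck k - s <= 1 / k.+2%:R.
  by rewrite /ck addrC addKr ler_pM2r ?invr_gt0 //; have := s0; lra.
have -> : 1 / k.+2%:R = eta k ^+ 2 / 8 :> R by rewrite eta_sqr; field.
by have := eta_le2 k; have := eta_ge0 k; set y := eta k; set c := ck k; nra.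
Qed.

Let eta_small e : 0 < e -> exists k, n.+1%:R * eta k < e.
Proof.
move=> e0; set e' := e / n.+1%:R; have e'0 : 0 < e' by rewrite divr_gt0.
have kX := archi_boundP (divr_ge0 (ler0n _ 8) (sqr_ge0 e')).
exists (Num.Def.archi_bound (8 / e' ^+ 2)); set k := Num.Def.archi_bound _ in kX *.
have eta_e' : eta k ^+ 2 < e' ^+ 2.
  rewrite eta_sqr ltr_pdivrMr // mulrC -ltr_pdivrMr ?exprn_gt0 //.
  by apply: lt_le_trans kX _; rewrite ler_nat -addn2 leq_addr.
by rewrite mulrC -ltr_pdivlMr // -/e'; have := eta_ge0 k; nra.
Qed.

Let exists_near_optimal :
  exists u, forall k, C (u k) /\ has_cap C (u k) (ck k).
Proof.
suff /choice[u hu] : forall k, exists x, C x /\ has_cap C x (ck k) by exists u.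
move=> k; have [c [_ [x [Cx capx]]] ck_c] := inf_lt (ex_intro _ 1 (cap_cosines1 CS Cint)) (ck_gt k).
by exists x; split => //; apply: has_cap_le capx; rewrite ltW.
Qed.

Let u := proj1_sig (cid exists_near_optimal).
Let hu k : C (u k) /\ has_cap C (u k) (ck k) := proj2_sig (cid exists_near_optimal) k.
Let uu k : dotp (u k) (u k) = 1. Proof. by have [/CS] := hu k. Qed.

Let u_dist k j : (k <= j)%N -> dotp (u k - u j) (u k - u j) <= 8 / k.+2%:R.
Proof.
move=> kj; have [Ck capk] := hu k; have [Cj capj] := hu j.
have s0' := s0; have s1' := s1.
have ck_itv : s <= ck k < 1 by rewrite ltW ?ck_gt ?ck_lt1.
have := has_cap_dist CS Cne Ccvx Cint Ck Cj ck_itv capk (has_cap_le (ck_anti kj) capj).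
rewrite -/s; set D := dotp _ _; set t := (1 - s) / k.+2%:R.
have t0 : 0 < t by rewrite divr_gt0 // subr_gt0.
have t_le : t <= (1 - s) / 2 by rewrite ler_pM2l ?subr_gt0 // lef_pV2 ?posrE // ler_nat.
have D0 : 0 <= D := dotp_ge0 _.
have <- : 8 * t / (1 - s) = 8 / k.+2%:R.
  by rewrite /t mulrA mulrAC mulfK // gt_eqF // subr_gt0.
rewrite ler_pdivlMr ?subr_gt0 // /ck -/t => Dt.
have : D * (1 - s) <= D * (1 - s ^+ 2) by apply: ler_wpM2l => //; nra.
have : 4 * ((s + t) ^+ 2 - s ^+ 2) <= 8 * t by nra.
lra.
Qed.

Let u_coord k j i : (k <= j)%N -> `|u k 0 i - u j 0 i| <= eta k.
Proof.
move=> kj; have := le_trans (coord_sqr_le_dotp (u k - u j) i) (u_dist kj).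
by rewrite !mxE -sqrtr_sqr /eta ler_sqrt ?divr_ge0.
Qed.

Let x := proj1_sig (cid (exists_coord_limit eta_ge0 u_coord)).
Let d k := x - u k.
Let d_coord k i : `|d k 0 i| <= eta k.
Proof. by rewrite !mxE; exact: (proj2_sig (cid (exists_coord_limit eta_ge0 u_coord)) k i). Qed.

Let zero_of_bound (r : R) : (forall k, `|r| <= 4 * (n.+1%:R * eta k)) -> r = 0.
Proof.
move=> rb; apply/normr0_eq0/eqP; rewrite eq_le normr_ge0 andbT leNgt; apply/negP => r0.
have [k kr] := eta_small (divr_gt0 r0 (ltr0n _ 4)); have := rb k; lra.
Qed.

Let x_unit : dotp x x = 1.
Proof.
apply/eqP; rewrite -subr_eq0; apply/eqP/zero_of_bound => k.
have -> : dotp x x - 1 = 2 * dotp (u k) (d k) + dotp (d k) (d k).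
  by rewrite /d !dotpBl !dotpBr uu (dotpC x (u k)); ring.
have ud := dotp_unit_coord_bound (uu k) (d_coord k).
have dd := dotp_coord_bound (d_coord k); have dd0 := dotp_ge0 (d k).
have dd2 : n.+1%:R * eta k ^+ 2 <= 2 * (n.+1%:R * eta k).
  by rewrite expr2 mulrA mulrC ler_wpM2r ?mulr_ge0 ?ler0n ?eta_le2.
apply: le_trans (ler_normD _ _) _.
by rewrite normrM (ger0_norm (ler0n _ 2)) (ger0_norm dd0); lra.
Qed.

Let dotp_x k z : dotp z z = 1 -> `|dotp z x - dotp z (u k)| <= n.+1%:R * eta k.
Proof. by move=> zz; rewrite -dotpBr; exact: dotp_unit_coord_bound zz (d_coord k). Qed.

Let x_mem : C x.
Proof.
apply: Ccl; first exact: x_unit.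
move=> e e0; have g0 : 0 < 1 - cos (Num.min e pi) by rewrite subr_gt0 cos_min_pi_lt1.
have [k ek] := eta_small g0; exists (u k); split; first by have [] := hu k.
apply: (acos_lt_of_cos_lt _ e0); first exact: unit_dotp_bound x_unit (uu k).
by have /ler_normlP[] := dotp_x k (uu k); rewrite uu (dotpC (u k) x); lra.
Qed.

Let x_cap : has_cap C x s.
Proof.
move=> z z1 zx; have zz : dotp z z = 1 := z1.
have zx_s : 0 < (dotp z x - s) / 2 by rewrite divr_gt0 // subr_gt0.
have [k ek] := eta_small zx_s.
have [_ capk] := hu k; apply: capk z1 _.
have : eta k <= n.+1%:R * eta k by rewrite ler_peMl ?eta_ge0 // ler1n.
have := ck_eta k; have /ler_normlP[] := dotp_x k zz; lra.
Qed.

Lemma exists_incenter : exists x, C x /\ has_cap C x (inradius_cos C).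
Proof. by exists x; split; [exact: x_mem | exact: x_cap]. Qed.

End Incenter.

Lemma sdist_set0 (R : realType) (n : nat) (x : 'rV[R]_(n.+1)) : sdist_set x set0 = +oo%E.
Proof. by rewrite /sdist_set image_set0 ereal_inf0. Qed.

Lemma mem_eq_of_boundary0 (R : realType) (n : nat) (C : set 'rV[R]_(n.+1)) x y :
  C `<=` @sphere R n -> C <> @sphere R n -> sclosed C ->
  ~ (exists b, sboundary C b) -> C x -> C y -> x = y.
Proof.
move=> CS Cne Ccl B0.
have [z /not_implyP[z1 Cz]] : exists z, ~ (sphere z -> C z).
  by apply/existsNP => SC; apply: (not_sphere_sub CS Cne) => z; apply: SC.
suff antipode w : C w -> w = - z by move=> /antipode -> /antipode ->.
move=> Cw; have ww : dotp w w = 1 := CS _ Cw; have zz : dotp z z = 1 := z1.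
have capw : has_cap C w (-1).
  by apply: contrapT => /(boundary_dotp_gt CS Ccl Cw (lexx _)) [b [Bb _]]; apply: B0; exists b.
have zw : dotp z w <= -1 by rewrite leNgt; apply/negP => /(capw _ z1).
apply: unit_dotp1_eq => //; first by rewrite dotpNl dotpNr opprK.
by rewrite dotpNr dotpC; have /andP[? _] := unit_dotp_bound zz ww; lra.
Qed.

Section Incircle.
Variables (R : realType) (n : nat) (C : set 'rV[R]_(n.+1)).
Hypotheses (CS : C `<=` @sphere R n) (Cne : C <> @sphere R n) (Ccl : sclosed C).
Hypotheses (Ccvx : sconvex C) (Cint : sinterior C !=set0).
Hypothesis CB : exists b, sboundary C b.
Implicit Types (x y : 'rV[R]_(n.+1)) (c : R).

Let s := inradius_cos C.
Let s0 : 0 <= s := inradius_cos_ge0 CS Cint.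
Let s1 : s < 1 := inradius_cos_lt1 Cint.
Let s_itv : -1 <= s <= 1. Proof. by rewrite (le_trans _ s0) ?lerN10 ?ltW. Qed.

Lemma inradius_cos_le_cap x c : C x -> has_cap C x c -> s <= c.
Proof.
move=> Cx capx; have [c0|c0] := ltP c 0.
  by have := no_cap_beyond_hemisphere CS Cne Ccvx CB Cx c0.
by apply: inradius_cos_le; split => //; exists x.
Qed.

Lemma sdist_set_le x : C x -> (sdist_set x (sboundary C) <= (acos s)%:E)%E.
Proof.
move=> Cx; rewrite leNgt; apply/negP => sx.
have s_pi : acos s < pi by rewrite acos_ltpi // (lt_le_trans _ s0) ?ltrN10 ?ltW.
have [t /andP[st tpi] tx] : exists2 t, acos s < t <= pi & (t%:E <= sdist_set x (sboundary C))%E.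
  move: sx; case: (sdist_set x _) => [r||] // sr; last by exists pi; rewrite ?s_pi ?lexx ?leey.
  exists (Num.min pi ((acos s + r) / 2)); rewrite ?ge_min ?lexx //.
    by rewrite lt_min s_pi /=; rewrite lte_fin in sr; lra.
  by rewrite lee_fin ge_min; apply/orP; right; rewrite lte_fin in sr; lra.
have t_itv : t \in `[0, pi] by rewrite in_itv /= tpi (le_trans (acos_ge0 _) (ltW st)).
have capx : has_cap C x (cos t) by apply/has_cap_sdist_set; rewrite ?cos_itv ?cosK.
have as_itv : acos s \in `[0, pi] by rewrite in_itv /= (acos_ge0 s_itv) (acos_lepi s_itv).
have : cos t < cos (acos s) by rewrite ltr_cos.
by rewrite acosK ?in_itv // ltNge (inradius_cos_le_cap Cx capx).
Qed.

Lemma sdist_set_incenter x : C x -> has_cap C x s ->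
  sdist_set x (sboundary C) = (acos s)%:E.
Proof.
move=> Cx capx; apply/eqP; rewrite eq_le sdist_set_le //=.
exact/(has_cap_sdist_set CS Ccl Cx s_itv).
Qed.

Lemma incenter_unique x y : C x -> C y -> has_cap C y s ->
  sdist_set x (sboundary C) = (acos s)%:E -> x = y.
Proof.
move=> Cx Cy capy dx.
have capx : has_cap C x s by apply/(has_cap_sdist_set CS Ccl Cx s_itv); rewrite dx.
have ss : s <= s < 1 by rewrite lexx s1.
have := has_cap_dist CS Cne Ccvx Cint Cx Cy ss capx capy; rewrite subrr mulr0 => xy.
have s2 : 0 < 1 - s ^+ 2 by have := s0; have := s1; nra.
have xy0 := dotp_ge0 (x - y).
have /dotp_eq0/eqP : dotp (x - y) (x - y) = 0 by apply/eqP; rewrite eq_le xy0 andbT; nra.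
by rewrite subr_eq0 => /eqP.
Qed.

(* If [y . x < 0], moving the ball of the incentre [x] along [y] keeps it in
   the cone and brings its centre closer to [0]: a deeper cap. *)
Lemma incenter_hemisphere x y : C x -> has_cap C x s -> C y -> 0 <= dotp y x.
Proof.
move=> Cx capx Cy; have xx : dotp x x = 1 := CS Cx; have yy : dotp y y = 1 := CS Cy.
rewrite leNgt; apply/negP => a0; set a := dotp y x in a0.
have ss : 0 < 1 - s ^+ 2 by have := s0; have := s1; nra.
set r := Num.sqrt (1 - s ^+ 2).
have r0 : 0 < r by rewrite sqrtr_gt0.
have r2 : r ^+ 2 = 1 - s ^+ 2 by rewrite sqr_sqrtr // ltW.
have Na0 : 0 < - a by rewrite oppr_gt0.
have ballv := ball_in_cone_shift CS Ccvx Na0 Cy (has_cap_ball (CS Cx) s_itv capx).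
have [vv [c Gc cE]] := ball_in_cone_cap_cosine CS Cne r0 ballv.
have sc : s <= c := inradius_cos_le Gc; case: Gc => c0 _.
rewrite (_ : dotp _ _ = 1 - a ^+ 2) in vv cE; last first.
  by rewrite !dotpDl !dotpDr !dotpZl !dotpZr xx yy (dotpC x y) -/a; ring.
have a2 : 0 < a ^+ 2 by nra.
have va : 0 < 1 - a ^+ 2 by apply: lt_le_trans vv; rewrite exprn_gt0.
have : r ^+ 2 < r ^+ 2 / (1 - a ^+ 2).
  by rewrite ltr_pdivlMr // -subr_gt0; have := exprn_gt0 2 r0; nra.
have : s ^+ 2 <= c ^+ 2 by have := s0; nra.
by rewrite cE r2; set Q := (1 - s ^+ 2) / _; lra.
Qed.

Lemma ereal_sup_sdist_set :
  ereal_sup [set sdist_set x (sboundary C) | x in C] = (acos s)%:E.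
Proof.
have [x [Cx capx]] := exists_incenter CS Cne Ccl Ccvx Cint.
apply/eqP; rewrite eq_le; apply/andP; split.
  by apply: ge_ereal_sup => _ [y Cy <-]; exact: sdist_set_le.
by rewrite -(sdist_set_incenter Cx capx); apply: ereal_sup_ubound; exists x.
Qed.

Lemma ereal_sup_sdist_incenter_le x : C x -> has_cap C x s ->
  (ereal_sup [set (sdist y x)%:E | y in C] <= (pi / 2)%:E)%E.
Proof.
move=> Cx capx; apply: ge_ereal_sup => _ [y Cy <-].
have yx_itv := unit_dotp_bound (CS Cy) (CS Cx).
rewrite lee_fin -acos0 acos_leE ?incenter_hemisphere //.
by rewrite lerN10 ler01.
Qed.

End Incircle.

Unset Implicit Arguments.

Theorem corollary2p7 (R : realType) (n : nat) (C : set 'rV[R]_(n.+1)) :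
  C `<=` @sphere R n -> C <> @sphere R n ->
  sclosed C -> sconvex C -> sinterior C !=set0 ->
  exists x0, [/\ C x0,
    sdist_set x0 (sboundary C) =
      ereal_sup [set sdist_set x (sboundary C) | x in C],
    (forall x1, C x1 ->
       sdist_set x1 (sboundary C) =
         ereal_sup [set sdist_set x (sboundary C) | x in C] -> x1 = x0) &
    (ereal_sup [set (sdist y x0)%:E | y in C] <= (pi / 2)%:E)%E].
Proof.
move=> CS Cne Ccl Ccvx Cint.
have [x0 [Cx0 cap0]] := exists_incenter CS Cne Ccl Ccvx Cint.
have [CB|CB0] := pselect (exists b, sboundary C b).
  have supE := ereal_sup_sdist_set CS Cne Ccl Ccvx Cint CB.
  exists x0; split => //; first by rewrite supE (sdist_set_incenter CS Cne Ccl Ccvx Cint CB).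
    by move=> x1 Cx1; rewrite supE; apply: (incenter_unique CS Cne Ccl Ccvx Cint Cx1 Cx0).
  exact: (ereal_sup_sdist_incenter_le CS Cne Ccvx Cint Cx0).
have C1 := mem_eq_of_boundary0 CS Cne Ccl CB0.
have -> : sboundary C = set0 by apply/seteqP; split => // b Bb; apply: CB0; exists b.
exists x0; split => //.
- by rewrite sdist_set0; apply/esym/ereal_supy; exists x0; rewrite ?sdist_set0.
- by move=> x1 Cx1 _; apply: C1.
apply: ge_ereal_sup => _ [y Cy <-].
by rewrite (C1 _ _ Cy Cx0) sdist_xx ?lee_fin ?divr_ge0 ?pi_ge0 //; apply: CS.
Qed.
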